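(* Consider the iterates of the partially Jacobi 3-block algorithm (context) and fix $k\ge0$ with $\eta_k\in(0,1/\nu)$. Then for every $w=(x;y;z;\lambda)\in\Omega$, $$F(w)-F(\tilde w^k)+\langle w-\tilde w^k,\mathcal J(w)\rangle\ge(w-\tilde w^k)^\top Q_k(w^k-\tilde w^k)+\zeta^k(x),$$ where $$Q_k=\begin{bmatrix}\mathcal D_k&0&0&0\\0&L_1+\beta B^\top B&0&-\tau B^\top\\0&0&L_2+\beta C^\top C&-\tau C^\top\\0&-B&-C&\frac1\beta I\end{bmatrix}.$$
   Context: Setting. $\mathcal X\subset\mathbb R^{n_1}$, $\mathcal Y\subset\mathbb R^{n_2}$, $\mathcal Z\subset\mathbb R^{n_3}$ are nonempty closed convex sets; $A\in\mathbb R^{n\times n_1}$, $B\in\mathbb R^{n\times n_2}$, $C\in\mathbb R^{n\times n_3}$, $b\in\mathbb R^n$; $g:\mathcal Y\to\mathbb R\cup\{+\infty\}$ and $l:\mathcal Z\to\mathbb R\cup\{+\infty\}$ are proper closed convex; $f=\frac1N\sum_{j=1}^Nf_j$, each $f_j$ real-valued, convex and continuously differentiable on an open set containing $\mathcal X$. Problem: $\min\{f(x)+g(y)+l(z): Ax+By+Cz=b,\ x\in\mathcal X,y\in\mathcal Y,z\in\mathcal Z\}$. A fixed symmetric positive definite $H$ and $\nu>0$ satisfy $\|\nabla f_j(x_1)-\nabla f_j(x_2)\|_{H^{-1}}\le\nu\|x_1-x_2\|_H$ for all $x_1,x_2\in\mathcal X$, all $j$. For symmetric $G$, $\|v\|_G^2:=v^\top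 Gv$; $G_1\succeq G_2$ means $G_1-G_2$ is positive semidefinite. $\Delta:=\{(\tau,s):\tau+s>0,\ \tau\le1,\ -\tau^2-s^2-\tau s+\tau+s+1\ge0\}$. Subroutine xsub. Inputs: $x^k\in\mathcal X$, $\breve x^k$, $h\in\mathbb R^{n_1}$, an integer $m_k\ge1$, $\eta_k>0$, a symmetric matrix $M_k$. Set $x_1=x^k$, $\breve x_1=\breve x^k$. For $t=1,\dots,m_k$: draw $\xi_t$ uniformly from $\{1,\dots,N\}$, independently of everything generated before; set $\beta_t=2/(t+1)$, $\gamma_t=2/(t\eta_k)$, $\hat x_t=\beta_t\breve x_t+(1-\beta_t)x_t$, $d_t=\nabla f_{\xi_t}(\hat x_t)+e_t$ where $e_t$ is a random vector whose conditional expectation given all previously generated random quantities and $\xi_t$ is $0$; $\breve x_{t+1}=\arg\min_{x\in\mathcal X}\{\langle d_t+h,x\rangle+\frac{\gamma_t}2\|x-\breve x_t\|_H^2+\frac12\|x-x^k\|_{M_k}^2\}$; $x_{t+1}=\beta_t\breve x_{t+1}+(1-\beta_t)x_t$. Output $x^{k+1}=x_{m_k+1}$, $\breve x^{k+1}=\breve x_{m_k+1}$. Put $\delta_t=\nabla f(\hat x_t)-d_t$ (inner quantities of outer iteration $k$), and for $x\in\mathcal X$ $$\zeta^k(x)=\frac{2}{m_k(m_k+1)}\Big[\frac1{\eta_k}\big(\|x-\breve x^{k+1}\|_H^2-\|x-\breve x^k\|_H^2\big)-\sum_{t=1}^{m_k}t\langle\delta_t,\breve x_t-x\rangle-\frac{\eta_k}{4(1-\eta_k\nu)}\sum_{t=1}^{m_k}t^2\|\delta_t\|_{H^{-1}}^2\Big].$$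 Partially Jacobi 3-block algorithm. Parameters: $\beta>0$, $H$, $(\tau,s)\in\Delta$, symmetric matrices $L_1\in\mathbb R^{n_2\times n_2}$, $L_2\in\mathbb R^{n_3\times n_3}$. Start: $(x^0,y^0,z^0,\lambda^0)\in\mathcal X\times\mathcal Y\times\mathcal Z\times\mathbb R^n$, $\breve x^0=x^0$. For $k=0,1,\dots$: choose integer $m_k\ge1$, $\eta_k>0$, symmetric $M_k$ with $\mathcal D_k:=M_k-\beta A^\top A\succeq0$; $h^k=-A^\top[\lambda^k-\beta(Ax^k+By^k+Cz^k-b)]$; $(x^{k+1},\breve x^{k+1})$ from xsub with inputs $x^k,\breve x^k,h^k,m_k,\eta_k,M_k$; $\lambda^{k+1/2}=\lambda^k-\tau\beta(Ax^{k+1}+By^k+Cz^k-b)$; $y^{k+1}\in\arg\min_{y\in\mathcal Y}g(y)+\frac\beta2\|Ax^{k+1}+By+Cz^k-b-\lambda^{k+1/2}/\beta\|^2+\frac12\|y-y^k\|_{L_1}^2$; $z^{k+1}\in\arg\min_{z\in\mathcal Z}l(z)+\frac\beta2\|Ax^{k+1}+By^k+Cz-b-\lambda^{k+1/2}/\beta\|^2+\frac12\|z-z^k\|_{L_2}^2$; $\lambda^{k+1}=\lambda^{k+1/2}-s\beta(Ax^{k+1}+By^{k+1}+Cz^{k+1}-b)$. (Minimizers are assumed to exist.) Notation. $\Omega=\mathcal X\times\mathcal Y\times\mathcal Z\times\mathbb R^n$; $w=(x;y;z;\lambda)$; $\mathcal Kw=Ax+By+Cz$; $F(w)=f(x)+g(y)+l(z)$;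 $\mathcal J(w)=(-A^\top\lambda;-B^\top\lambda;-C^\top\lambda;\mathcal Kw-b)$; $w^k=(x^k;y^k;z^k;\lambda^k)$; $\tilde\lambda^k=\lambda^k-\beta(Ax^{k+1}+By^k+Cz^k-b)$; $\tilde w^k=(x^{k+1};y^{k+1};z^{k+1};\tilde\lambda^k)$. *)

From HB Require Import structures.
From mathcomp Require Import all_boot all_order all_algebra.
From mathcomp Require Import all_classical all_reals all_analysis.
Set Implicit Arguments. Unset Strict Implicit. Unset Printing Implicit Defensive.
Import Order.TTheory GRing.Theory Num.Theory.
Import numFieldNormedType.Exports.
Local Open Scope classical_set_scope.
Local Open Scope ring_scope.

Section Defs.
Variable R : realType.

Definition dot n (u v : 'cV[R]_n) : R := (u^T *m v) 0 0.

Definition sqnorm n (G : 'M[R]_n) (v : 'cV[R]_n) : R := (v^T *m G *m v) 0 0.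

Definition symmx n (G : 'M[R]_n) : Prop := G^T = G.

Definition psd n (G : 'M[R]_n) : Prop := forall v : 'cV[R]_n, 0 <= sqnorm G v.

Definition spd n (G : 'M[R]_n) : Prop :=
  symmx G /\ forall v : 'cV[R]_n, v != 0 -> 0 < sqnorm G v.

Definition convex_set n (S : set 'cV[R]_n) : Prop :=
  forall u v t, S u -> S v -> 0 <= t <= 1 -> S (t *: u + (1 - t) *: v).

Definition ncc_set n (S : set 'cV[R]_n) : Prop :=
  S !=set0 /\ closed S /\ convex_set S.

Definition convex_fun_on n (S : set 'cV[R]_n) (h : 'cV[R]_n -> R) : Prop :=
  forall u v t, S u -> S v -> 0 <= t <= 1 ->
    h (t *: u + (1 - t) *: v) <= t * h u + (1 - t) * h v.

Definition C1_with_grad n (U : set 'cV[R]_n) (h : 'cV[R]_n -> R)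
    (gr : 'cV[R]_n -> 'cV[R]_n) : Prop :=
  open U /\ forall x, U x ->
    [/\ differentiable h x, (forall v, 'D_v h x = dot (gr x) v)
      & {for x, continuous gr}].

Definition proper_closed_convex n (S : set 'cV[R]_n) (h : 'cV[R]_n -> \bar R)
  : Prop :=
  [/\ (forall u, S u -> h u != -oo%E),
      (exists u, S u /\ h u \is a fin_num),
      closed [set p : 'cV[R]_n * R | S p.1 /\ (h p.1 <= p.2%:E)%E]
    & (forall u v t, S u -> S v -> 0 < t < 1 ->
        (h (t *: u + (1 - t) *: v)%R <= t%:E * h u + (1 - t)%:E * h v)%E)].

Definition Delta (tau s : R) : Prop :=
  0 < tau + s /\ tau <= 1 /\ 0 <= - tau ^+ 2 - s ^+ 2 - tau * s + tau + s + 1.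

Definition is_argmin n (S : set 'cV[R]_n) (obj : 'cV[R]_n -> R) m : Prop :=
  S m /\ forall u, S u -> obj m <= obj u.

Definition is_argmin_e n (S : set 'cV[R]_n) (obj : 'cV[R]_n -> \bar R) m : Prop :=
  S m /\ forall u, S u -> (obj m <= obj u)%E.

End Defs.

Section Algo.
Variable R : realType.

Definition wvec n1 n2 n3 n (x : 'cV[R]_n1) (y : 'cV[R]_n2) (z : 'cV[R]_n3)
  (lam : 'cV[R]_n) : 'cV[R]_(n1 + (n2 + (n3 + n))) :=
  col_mx x (col_mx y (col_mx z lam)).

Definition Jop n1 n2 n3 n (A : 'M[R]_(n, n1)) (B : 'M[R]_(n, n2))
  (C : 'M[R]_(n, n3)) (b : 'cV[R]_n) (x : 'cV[R]_n1) (y : 'cV[R]_n2)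
  (z : 'cV[R]_n3) (lam : 'cV[R]_n) : 'cV[R]_(n1 + (n2 + (n3 + n))) :=
  wvec (- A^T *m lam) (- B^T *m lam) (- C^T *m lam)
       (A *m x + B *m y + C *m z - b).

(* the block matrix Q_k, with D = D_k = M_k - beta A^T A *)
Definition Qmat n1 n2 n3 n (D : 'M[R]_n1) (L1 : 'M[R]_n2) (L2 : 'M[R]_n3)
  (B : 'M[R]_(n, n2)) (C : 'M[R]_(n, n3)) (beta tau : R)
  : 'M[R]_(n1 + (n2 + (n3 + n))) :=
  block_mx D 0 0
    (block_mx (L1 + beta *: (B^T *m B)) (row_mx (0 : 'M[R]_(n2, n3)) (- tau *: B^T))
              (col_mx (0 : 'M[R]_(n3, n2)) (- B))
              (block_mx (L2 + beta *: (C^T *m C)) (- tau *: C^T)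
                        (- C) (beta^-1)%:M)).

(* zeta^k(x); delta t and xbin t are the inner quantities delta_t and
   breve x_t (t = 1..m), xbk = breve x^k, xbk1 = breve x^{k+1} *)
Definition zeta n1 (H : 'M[R]_n1) (nu eta : R) (m : nat) (xbk xbk1 : 'cV[R]_n1)
  (delta xbin : nat -> 'cV[R]_n1) (x : 'cV[R]_n1) : R :=
  2 / (m%:R * (m%:R + 1)) *
  (eta^-1 * (sqnorm H (x - xbk1) - sqnorm H (x - xbk))
   - \sum_(1 <= t < m.+1) t%:R * dot (delta t) (xbin t - x)
   - eta / (4 * (1 - eta * nu)) *
       \sum_(1 <= t < m.+1) (t%:R ^+ 2 * sqnorm (invmx H) (delta t))).

End Algo.

From Pilot Require Import Defs.
From HB Require Import structures.
From mathcomp Require Import all_boot all_order all_algebra.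
From mathcomp Require Import all_classical all_reals all_analysis.
From mathcomp Require Import ring lra.
Import Order.TTheory GRing.Theory Num.Theory.
Import numFieldNormedType.Exports.
Local Open Scope classical_set_scope.
Local Open Scope ring_scope.
Set Implicit Arguments. Unset Strict Implicit. Unset Printing Implicit Defensive.

(* The proof treats the three blocks separately and adds the results.
   - x-block: f is an average of convex functions with nu-Lipschitz gradients,
     so it has tangent lower bounds and the quadratic upper bound of the descent
     lemma. One step of the inner loop (an AC-SA step) contracts the gap of the
     x-subproblem objective Psi up to gradient-error terms; weighting step t by
     t(t+1)/2 makes the bounds telescope, and dividing by m(m+1)/2 yields the
     error term zeta^k. A gap identity for Psi turns this into the x-part of the
     inequality with the coupling matrix D_k = M_k - beta A^T A.
   - y- and z-blocks: a proximal step on an extended-valued proper closed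
     convex function satisfies a first-order optimality inequality, obtained by
     perturbing the minimizer along segments; since the residual is affine in
     the block, this gives the y- and z-parts with the blocks of Q_k.
   - J is affine with skew-symmetric linear part, so <w - w~, J(w)> equals
     <w - w~, J(w~)>, and expanding Q_k blockwise the three estimates add up to
     the theorem. *)

Section Bilinear.
Variable R : realType.

Definition bform n (G : 'M[R]_n) (u v : 'cV[R]_n) : R := (u^T *m G *m v) 0 0.

Lemma sqnorm_bform n (G : 'M[R]_n) v : sqnorm G v = bform G v v.
Proof. by []. Qed.

Lemma bformDl n (G : 'M[R]_n) u1 u2 v : bform G (u1 + u2) v = bform G u1 v + bform G u2 v.
Proof. by rewrite /bform linearD /= !mulmxDl mxE. Qed.

Lemma bformDr n (G : 'M[R]_n) u v1 v2 : bform G u (v1 + v2) = bform G u v1 + bform G u v2.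
Proof. by rewrite /bform mulmxDr mxE. Qed.

Lemma bformZl n (G : 'M[R]_n) k u v : bform G (k *: u) v = k * bform G u v.
Proof. by rewrite /bform linearZ /= -!scalemxAl mxE. Qed.

Lemma bformZr n (G : 'M[R]_n) k u v : bform G u (k *: v) = k * bform G u v.
Proof. by rewrite /bform -scalemxAr mxE. Qed.

Lemma bformNl n (G : 'M[R]_n) u v : bform G (- u) v = - bform G u v.
Proof. by rewrite -scaleN1r bformZl mulN1r. Qed.

Lemma bformNr n (G : 'M[R]_n) u v : bform G u (- v) = - bform G u v.
Proof. by rewrite -scaleN1r bformZr mulN1r. Qed.

Lemma bformC n (G : 'M[R]_n) u v : symmx G -> bform G u v = bform G v u.
Proof.
move=> hG; rewrite /bform -[u^T *m G *m v]trmxK [LHS]mxE.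
by rewrite !trmx_mul trmxK hG mulmxA.
Qed.

Lemma dot_bform n (u v : 'cV[R]_n) : dot u v = bform 1%:M u v.
Proof. by rewrite /dot /bform mulmx1. Qed.

Lemma dotC n (u v : 'cV[R]_n) : dot u v = dot v u.
Proof. by rewrite !dot_bform bformC // /symmx trmx1. Qed.

Lemma dotDl n (u1 u2 v : 'cV[R]_n) : dot (u1 + u2) v = dot u1 v + dot u2 v.
Proof. by rewrite !dot_bform bformDl. Qed.

Lemma dotDr n (u v1 v2 : 'cV[R]_n) : dot u (v1 + v2) = dot u v1 + dot u v2.
Proof. by rewrite !dot_bform bformDr. Qed.

Lemma dotZl n k (u v : 'cV[R]_n) : dot (k *: u) v = k * dot u v.
Proof. by rewrite !dot_bform bformZl. Qed.

Lemma dotZr n k (u v : 'cV[R]_n) : dot u (k *: v) = k * dot u v.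
Proof. by rewrite !dot_bform bformZr. Qed.

Lemma dotNl n (u v : 'cV[R]_n) : dot (- u) v = - dot u v.
Proof. by rewrite !dot_bform bformNl. Qed.

Lemma dotNr n (u v : 'cV[R]_n) : dot u (- v) = - dot u v.
Proof. by rewrite !dot_bform bformNr. Qed.

Lemma dotBl n (u1 u2 v : 'cV[R]_n) : dot (u1 - u2) v = dot u1 v - dot u2 v.
Proof. by rewrite dotDl dotNl. Qed.

Lemma dotBr n (u v1 v2 : 'cV[R]_n) : dot u (v1 - v2) = dot u v1 - dot u v2.
Proof. by rewrite dotDr dotNr. Qed.

Lemma comb_shift n (u a : 'cV[R]_n) (e : R) :
  e *: u + (1 - e) *: a = a + e *: (u - a).
Proof. by rewrite scalerBr scalerBl scale1r addrCA. Qed.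

Lemma dot_mulmxl m n (A : 'M[R]_(m, n)) u v : dot (A *m u) v = dot u (A^T *m v).
Proof. by rewrite /dot trmx_mul mulmxA. Qed.

Lemma dot_sum n N (F : 'I_N -> 'cV[R]_n) w :
  dot (\sum_(j < N) F j) w = \sum_(j < N) dot (F j) w.
Proof.
elim/big_rec2: _ => [|j y1 y2 _ <-]; first by rewrite /dot trmx0 mul0mx mxE.
by rewrite dotDl.
Qed.

Lemma sqnorm_shift n (G : 'M[R]_n) a w (e : R) :
  sqnorm G (a + e *: w) = sqnorm G a + e * (bform G a w + bform G w a)
                          + e ^+ 2 * sqnorm G w.
Proof. by rewrite !sqnorm_bform !bformDl !bformDr !bformZl !bformZr; ring. Qed.

Lemma dot_shift n (u a : 'cV[R]_n) (e : R) :
  dot (u + e *: a) (u + e *: a) = dot u u + e * (dot u a + dot a u) + e ^+ 2 * dot a a.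
Proof. by rewrite !dot_bform -!sqnorm_bform sqnorm_shift. Qed.

Lemma sqnormZ n (G : 'M[R]_n) (k : R) v : sqnorm G (k *: v) = k ^+ 2 * sqnorm G v.
Proof. by rewrite !sqnorm_bform bformZl bformZr mulrA expr2. Qed.

Lemma mxE_add m n (A B : 'M[R]_(m, n)) i j : (A + B) i j = A i j + B i j.
Proof. by rewrite mxE. Qed.

Lemma mxE_opp m n (A : 'M[R]_(m, n)) i j : (- A) i j = - A i j.
Proof. by rewrite mxE. Qed.

Lemma mxE_scale m n k (A : 'M[R]_(m, n)) i j : (k *: A) i j = k * A i j.
Proof. by rewrite mxE. Qed.

Lemma bform_subAtA n n1 (M : 'M[R]_n1) (A : 'M[R]_(n, n1)) (beta : R) u v :
  bform (M - beta *: (A^T *m A)) u v = bform M u v - beta * dot (A *m u) (A *m v).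
Proof.
rewrite /bform /dot mulmxBr mulmxBl mxE_add mxE_opp -scalemxAr -scalemxAl.
by rewrite mxE_scale trmx_mul !mulmxA.
Qed.

Definition affine_in n p (K : 'M[R]_(n, p)) (res : 'cV[R]_p -> 'cV[R]_n) : Prop :=
  forall u v, res u - res v = K *m (u - v).

Lemma residuals_affine n n1 n2 n3 (A : 'M[R]_(n, n1))
    (B : 'M[R]_(n, n2)) (C : 'M[R]_(n, n3)) (b : 'cV[R]_n) x y z :
  [/\ affine_in A (fun u => A *m u + B *m y + C *m z - b),
      affine_in B (fun v => A *m x + B *m v + C *m z - b)
    & affine_in C (fun w => A *m x + B *m y + C *m w - b)].
Proof.
by split=> u v; rewrite mulmxBr; apply/matrixP => i j; rewrite !(mxE_add, mxE_opp); ring.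
Qed.

End Bilinear.

Section SmoothConvex.
Variable R : realType.

Lemma convex_segment n (X : set 'cV[R]_n) (a u : 'cV[R]_n) (s : R) :
  Defs.convex_set X -> X a -> X u -> 0 <= s <= 1 -> X (s *: (u - a) + a).
Proof.
by move=> cX Xa Xu hs; rewrite addrC -comb_shift; exact: cX.
Qed.

Lemma convex_gradient_ineq n (X U : set 'cV[R]_n) (h : 'cV[R]_n -> R) gr :
  X `<=` U -> convex_fun_on X h -> C1_with_grad U h gr ->
  forall a u, X a -> X u -> h a + dot (gr a) (u - a) <= h u.
Proof.
move=> XU ch [_ hU] a u Xa Xu.
have [da Dv _] := hU a (XU a Xa).
rewrite -Dv -lerBrDl.
have cv : (fun t : R => t^-1 *: ((h \o shift a) (t *: (u - a)) - h a)) @ 0^'+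
   --> 'D_(u - a) h a.
  by apply: cvg_dnbhs_at_right; exact: (@diff_derivable _ _ _ _ _ (u - a) da).
apply: (cvgr_to_le cv); near=> t.
have t0 : 0 < t by near: t; exact: nbhs_right_gt.
have t1 : t < 1 by near: t; apply: nbhs_right_lt; exact: ltr01.
rewrite /= [t *: _ + a]addrC -comb_shift.
have hc := ch u a t Xu Xa; rewrite ltW // ltW // in hc.
rewrite /GRing.scale /= ler_pdivrMl // mulrBr.
by move: (hc isT); lra.
Unshelve. all: by end_near.
Qed.

Lemma line_derive n (h : 'cV[R]_n -> R) (a v : 'cV[R]_n) (s : R) :
  derivable h (s *: v + a) v ->
  is_derive s 1 (fun t : R => h (t *: v + a)) ('D_v h (s *: v + a)).
Proof.
move=> dh.
have E : (fun t : R => t^-1 *: (((fun t : R => h (t *: v + a)) \o shift s) (t *: 1)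
             - h (s *: v + a))) =
         (fun t : R => t^-1 *: ((h \o shift (s *: v + a)) (t *: v) - h (s *: v + a))).
  apply/funext => t /=; congr (_ *: (h _ - _)).
  by rewrite scalerDl addrA /GRing.scale /= mulr1.
by split; rewrite /derivable /derive ?E.
Qed.

Lemma descent_profile_derive n (h : 'cV[R]_n -> R) (a v : 'cV[R]_n) (D K s : R) :
  derivable h (s *: v + a) v ->
  is_derive s 1 (fun t : R => h (t *: v + a) - (t * D + K * (t * t)))
    ('D_v h (s *: v + a) - (D + K * (2 * s))).
Proof.
move=> dh.
have hid : is_derive s 1 (id : R -> R) 1 by exact: is_derive_id.
have hlin := is_deriveM hid (is_derive_cst D s 1).
have hquad := is_deriveM (is_derive_cst K s 1) (is_deriveM hid hid).
have -> : D + K * (2 * s)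
    = (id s *: 0 + cst D s *: 1) + (cst K s *: (id s *: 1 + id s *: 1) + (id * id) s *: 0).
  by rewrite /= /GRing.scale /=; ring.
exact: is_deriveB (line_derive dh) (is_deriveD hlin hquad).
Qed.

Lemma descent_lemma n (X U : set 'cV[R]_n) (h : 'cV[R]_n -> R) gr (H : 'M[R]_n)
    (nu : R) :
  Defs.convex_set X -> X `<=` U -> C1_with_grad U h gr ->
  (forall x1 x2, X x1 -> X x2 ->
     dot (gr x1 - gr x2) (x1 - x2) <= nu * sqnorm H (x1 - x2)) ->
  forall a u, X a -> X u ->
  h u <= h a + dot (gr a) (u - a) + nu / 2 * sqnorm H (u - a).
Proof.
move=> cX XU [_ hU] hL a u Xa Xu.
set v := u - a; set K := sqnorm H v; set D := dot (gr a) v.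
have Xs : forall s : R, 0 <= s <= 1 -> X (s *: v + a).
  by move=> s; exact: convex_segment.
have Dh : forall s : R, 0 <= s <= 1 -> 'D_v h (s *: v + a) = dot (gr (s *: v + a)) v.
  by move=> s hs; have [_ -> _] := hU _ (XU _ (Xs s hs)).
pose phi := fun t : R => h (t *: v + a) - (t * D + nu / 2 * K * (t * t)).
pose dphi := fun t : R => 'D_v h (t *: v + a) - (D + nu / 2 * K * (2 * t)).
have phi_derive : forall s : R, 0 <= s <= 1 -> is_derive s 1 phi (dphi s).
  move=> s hs; have [ds _ _] := hU _ (XU _ (Xs s hs)).
  exact: descent_profile_derive (@diff_derivable _ _ _ _ _ v ds).
have [c c01 hc] : exists2 c : R, c \in `]0, 1[ & phi 1 - phi 0 = dphi c * (1 - 0).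
  apply: (@MVT _ phi dphi 0 1 ltr01).
  - move=> t; rewrite in_itv /= => /andP[t0 t1].
    by apply: phi_derive; rewrite ltW // ltW.
  - apply: derivable_within_continuous => t; rewrite in_itv /= => ht.
    by case: (phi_derive t ht).
move: c01; rewrite in_itv /= => /andP[c0 c1].
have hcx : 0 <= c <= 1 by rewrite !ltW.
have mono : c * (dot (gr (c *: v + a)) v - D) <= c * (nu * c * K).
  have := hL _ _ (Xs c hcx) Xa.
  rewrite addrK dotZr /K sqnormZ dotBl -/D; nra.
move: hc; rewrite /phi /dphi scale1r scale0r add0r /v subrK -/v Dh // => hc.
rewrite ler_pM2l // in mono.
lra.
Qed.

End SmoothConvex.

Section PositiveDefinite.
Variable R : realType.

Lemma spd_unitmx n (H : 'M[R]_n) : spd H -> H \in unitmx.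
Proof.
move=> [_ hp]; apply/negPn/negP => hn.
have /rowV0Pn [v vK v0] : kermx H != 0 by rewrite kermx_eq0 row_free_unit.
have vH : v *m H = 0 by apply/eqP; rewrite -sub_kermx.
have vT0 : v^T != 0 by rewrite -trmx0 (inj_eq trmx_inj).
by have := hp _ vT0; rewrite /sqnorm trmxK vH mul0mx mxE ltxx.
Qed.

Lemma sqnorm_spd_ge0 n (H : 'M[R]_n) v : spd H -> 0 <= sqnorm H v.
Proof.
move=> [_ hp]; have [->|v0] := eqVneq v 0; last exact/ltW/hp.
by rewrite /sqnorm mulmx0 mxE.
Qed.

Lemma dual_sqnorm n (H : 'M[R]_n) u : spd H ->
  sqnorm (invmx H) u = sqnorm H (invmx H *m u) /\
  forall v, dot u v = bform H (invmx H *m u) v.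
Proof.
move=> hH; have hu := spd_unitmx hH.
have hiT : (invmx H)^T = invmx H by rewrite trmx_inv hH.1.
split; first by rewrite /sqnorm trmx_mul hiT -!mulmxA (mulmxA H) mulmxV // mul1mx !mulmxA.
by move=> v; rewrite /bform /dot trmx_mul hiT -!mulmxA (mulmxA (invmx H)) mulVmx // mul1mx.
Qed.

Lemma dual_sqnorm_ge0 n (H : 'M[R]_n) u : spd H -> 0 <= sqnorm (invmx H) u.
Proof. by move=> hH; rewrite (dual_sqnorm u hH).1 sqnorm_spd_ge0. Qed.

Lemma young_spd n (H : 'M[R]_n) u v (c : R) : spd H -> 0 < c ->
  dot u v <= sqnorm (invmx H) u / (2 * c) + c / 2 * sqnorm H v.
Proof.
move=> hH c0; have [E1 E2] := dual_sqnorm u hH.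
set p := invmx H *m u in E1 E2.
have h0 := sqnorm_spd_ge0 (p - c *: v) hH.
rewrite sqnorm_bform !bformDl !bformDr !bformNl !bformNr !bformZl !bformZr in h0.
rewrite (bformC v p hH.1) -(E2 v) in h0.
rewrite E1 !sqnorm_bform.
have -> : bform H p p / (2 * c) + c / 2 * bform H v v
   = (bform H p p + c ^+ 2 * bform H v v) / (2 * c) by field; rewrite gt_eqF.
by rewrite ler_pdivlMr ?mulr_gt0 //; nra.
Qed.

Lemma lipschitz_monotone n (H : 'M[R]_n) (nu : R) (g1 g2 x1 x2 : 'cV[R]_n) :
  spd H -> 0 < nu ->
  Num.sqrt (sqnorm (invmx H) (g1 - g2)) <= nu * Num.sqrt (sqnorm H (x1 - x2)) ->
  dot (g1 - g2) (x1 - x2) <= nu * sqnorm H (x1 - x2).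
Proof.
move=> hH n0 hl.
set a := sqnorm (invmx H) (g1 - g2) in hl *.
set b := sqnorm H (x1 - x2) in hl *.
have a0 : 0 <= a := dual_sqnorm_ge0 _ hH.
have b0 : 0 <= b := sqnorm_spd_ge0 _ hH.
have ab : a <= nu ^+ 2 * b.
  rewrite -(sqr_sqrtr a0) -(sqr_sqrtr b0) !expr2.
  have := ler_pM (sqrtr_ge0 a) (sqrtr_ge0 a) hl hl; nra.
have := young_spd (g1 - g2) (x1 - x2) hH n0; rewrite -/a -/b.
have : a / (2 * nu) <= nu ^+ 2 * b / (2 * nu) by rewrite ler_pM2r // invr_gt0 mulr_gt0.
have -> : nu ^+ 2 * b / (2 * nu) = nu / 2 * b by field; rewrite gt_eqF.
lra.
Qed.

Lemma psd_of_psd_subAtA n m (M : 'M[R]_n) (A : 'M[R]_(m, n)) (beta : R) :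
  0 < beta -> psd (M - beta *: (A^T *m A)) -> psd M.
Proof.
move=> b0 hp v; have := hp v.
rewrite sqnorm_bform bform_subAtA -sqnorm_bform.
have : 0 <= dot (A *m v) (A *m v).
  rewrite /dot mxE; apply: sumr_ge0 => i _; rewrite mxE -expr2; exact: sqr_ge0.
nra.
Qed.

End PositiveDefinite.

Section Average.
Variable R : realType.
Variables (n N : nat) (X : set 'cV[R]_n).
Variables (fj : 'I_N -> 'cV[R]_n -> R) (gradf : 'I_N -> 'cV[R]_n -> 'cV[R]_n).

Let f u := N%:R^-1 * \sum_(j < N) fj j u.
Let gF u := N%:R^-1 *: \sum_(j < N) gradf j u.

Lemma average_gradient_ineq :
  (forall j a u, X a -> X u -> fj j a + dot (gradf j a) (u - a) <= fj j u) ->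
  forall a u, X a -> X u -> f a + dot (gF a) (u - a) <= f u.
Proof.
move=> h a u Xa Xu; rewrite /f /gF dotZl dot_sum -mulrDr -big_split /=.
by rewrite ler_wpM2l ?invr_ge0 // ler_sum // => j _; apply: h.
Qed.

Lemma average_descent (H : 'M[R]_n) (nu : R) : (0 < N)%N ->
  (forall j a u, X a -> X u ->
     fj j u <= fj j a + dot (gradf j a) (u - a) + nu / 2 * sqnorm H (u - a)) ->
  forall a u, X a -> X u ->
  f u <= f a + dot (gF a) (u - a) + nu / 2 * sqnorm H (u - a).
Proof.
move=> N0 h a u Xa Xu; rewrite /f /gF dotZl dot_sum -mulrDr.
have hN : 0 < N%:R :> R by rewrite ltr0n.
have -> : nu / 2 * sqnorm H (u - a)
    = N%:R^-1 * \sum_(j < N) (nu / 2 * sqnorm H (u - a)).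
  by rewrite sumr_const card_ord -mulr_natr; field; rewrite gt_eqF.
rewrite -mulrDr -!big_split /= ler_wpM2l ?invr_ge0 ?ler0n //.
by apply: ler_sum => j _; apply: h.
Qed.

Lemma average_smooth_convex (U : 'I_N -> set 'cV[R]_n) (H : 'M[R]_n) (nu : R) :
  (0 < N)%N -> Defs.convex_set X -> spd H -> 0 < nu ->
  (forall j, [/\ X `<=` U j, convex_fun_on X (fj j)
               & C1_with_grad (U j) (fj j) (gradf j)]) ->
  (forall j x1 x2, X x1 -> X x2 ->
     Num.sqrt (sqnorm (invmx H) (gradf j x1 - gradf j x2))
       <= nu * Num.sqrt (sqnorm H (x1 - x2))) ->
  (forall a u, X a -> X u -> f a + dot (gF a) (u - a) <= f u) /\
  (forall a u, X a -> X u ->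
     f u <= f a + dot (gF a) (u - a) + nu / 2 * sqnorm H (u - a)).
Proof.
move=> N0 cX hH hnu hf hLip; split.
  apply: average_gradient_ineq => j; have [XU cj C1] := hf j.
  exact: convex_gradient_ineq XU cj C1.
apply: average_descent => // j; have [XU _ C1] := hf j.
apply: (descent_lemma cX XU C1) => x1 x2 X1 X2.
exact: lipschitz_monotone hH hnu (hLip j x1 x2 X1 X2).
Qed.

End Average.

Section ThreePoint.
Variable R : realType.

(* If e L + e^2 K >= 0 for all e in ]0, 1[, then L >= 0: a first-order
   perturbation cannot decrease a quantity that is minimal at e = 0. *)
Lemma first_order_nonneg (L K : R) :
  (forall e : R, 0 < e < 1 -> 0 <= e * L + e ^+ 2 * K) -> 0 <= L.
Proof.
move=> h; rewrite leNgt; apply/negP => L0.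
set e := - L / (2 * (`|K| + - L)).
have hK := normr_ge0 K.
have hKL : 0 < `|K| + - L by rewrite ltr_wpDl // oppr_gt0.
have e0 : 0 < e by rewrite /e divr_gt0 // ?oppr_gt0 // mulr_gt0.
have e1 : e < 1 by rewrite /e ltr_pdivrMr ?mulr_gt0 //; lra.
have eK : e * `|K| <= - L / 2.
  rewrite /e mulrAC ler_pdivrMr ?mulr_gt0 //.
  have -> : - L / 2 * (2 * (`|K| - L)) = - L * `|K| + L * L by field.
  by have := sqr_ge0 L; rewrite expr2; lra.
have eKK : e * K <= e * `|K| by rewrite ler_pM2l // ler_norm.
have := h e; rewrite e0 e1 => /(_ isT).
rewrite expr2 -mulrA -mulrDr pmulr_rge0 //; lra.
Qed.

Lemma argmin_three_point n (X : set 'cV[R]_n) (c : 'cV[R]_n) (al be : R)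
    (G1 G2 : 'M[R]_n) (p1 p2 u xx : 'cV[R]_n) :
  Defs.convex_set X ->
  is_argmin X (fun u => dot c u + al * sqnorm G1 (u - p1) + be * sqnorm G2 (u - p2)) u ->
  X xx ->
  dot c u + al * sqnorm G1 (u - p1) + be * sqnorm G2 (u - p2)
    + al * sqnorm G1 (xx - u) + be * sqnorm G2 (xx - u)
  <= dot c xx + al * sqnorm G1 (xx - p1) + be * sqnorm G2 (xx - p2).
Proof.
move=> cX [Xu hmin] Xxx; set w := xx - u.
set L := dot c w + al * (bform G1 (u - p1) w + bform G1 w (u - p1))
                 + be * (bform G2 (u - p2) w + bform G2 w (u - p2)).
set K := al * sqnorm G1 w + be * sqnorm G2 w.
have E : forall e : R, e *: xx + (1 - e) *: u = u + e *: w by move=> e; rewrite comb_shift.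
have obj_line : forall e : R,
   dot c (e *: xx + (1 - e) *: u) + al * sqnorm G1 (e *: xx + (1 - e) *: u - p1)
     + be * sqnorm G2 (e *: xx + (1 - e) *: u - p2)
   = dot c u + al * sqnorm G1 (u - p1) + be * sqnorm G2 (u - p2) + (e * L + e ^+ 2 * K).
  move=> e; rewrite E ![u + _ - _]addrAC !sqnorm_shift dotDr dotZr /L /K; ring.
have L0 : 0 <= L.
  apply: (@first_order_nonneg L K) => e /andP[e0 e1].
  have he : 0 <= e <= 1 by rewrite !ltW.
  have := hmin _ (cX _ _ e Xxx Xu he).
  by rewrite obj_line; lra.
have := obj_line 1; rewrite scale1r subrr scale0r addr0 => ->.
rewrite /K; lra.
Qed.

End ThreePoint.

Section AcceleratedStep.
Variable R : realType.

Definition xsub_obj n (f : 'cV[R]_n -> R) (h : 'cV[R]_n) (M : 'M[R]_n) (xk u : 'cV[R]_n)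
  : R := f u + dot h u + 1 / 2 * sqnorm M (u - xk).

Lemma sqnorm_convex n (G : 'M[R]_n) (l : R) u v : psd G -> 0 <= l <= 1 ->
  sqnorm G (l *: u + (1 - l) *: v) <= l * sqnorm G u + (1 - l) * sqnorm G v.
Proof.
move=> hG /andP[l0 l1].
have E : l * sqnorm G u + (1 - l) * sqnorm G v - sqnorm G (l *: u + (1 - l) *: v)
   = l * (1 - l) * sqnorm G (u - v).
  by rewrite !sqnorm_bform !bformDl !bformDr !bformNl !bformNr !bformZl !bformZr; ring.
have : 0 <= l * (1 - l) * sqnorm G (u - v) by rewrite !mulr_ge0 // subr_ge0.
by rewrite -E; lra.
Qed.

Section Smooth.
Variables (n : nat) (X : set 'cV[R]_n) (f : 'cV[R]_n -> R) (gF : 'cV[R]_n -> 'cV[R]_n).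
Variables (H : 'M[R]_n) (nu : R).
Hypothesis cX : Defs.convex_set X.
Hypothesis hgrad : forall a u, X a -> X u -> f a + dot (gF a) (u - a) <= f u.
Hypothesis hdesc : forall a u, X a -> X u ->
  f u <= f a + dot (gF a) (u - a) + nu / 2 * sqnorm H (u - a).

Lemma smooth_interpolation (b b' x x' xx : 'cV[R]_n) (bt : R) :
  0 <= bt <= 1 -> X b -> X b' -> X x -> X xx -> x' = bt *: b' + (1 - bt) *: x ->
  f x' <= (1 - bt) * f x + bt * (f xx + dot (gF (bt *: b + (1 - bt) *: x)) (b' - xx))
          + nu / 2 * (bt ^+ 2 * sqnorm H (b' - b)).
Proof.
move=> hbt Xb Xb' Xx Xxx ex'; have /andP[bt0 bt1] := hbt.
set xh := bt *: b + (1 - bt) *: x; set g := gF xh.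
have Xxh : X xh by apply: cX.
have Xx' : X x' by rewrite ex'; apply: cX.
have step_diff : x' - xh = bt *: (b' - b).
  by rewrite ex' /xh; apply/matrixP => i j; rewrite !mxE; ring.
have lin_split : dot g (x' - xh)
    = (1 - bt) * dot g (x - xh) + bt * dot g (xx - xh) + bt * dot g (b' - xx).
  rewrite -!dotZr -!dotDr; congr dot.
  by rewrite ex' /xh; apply/matrixP => i j; rewrite !mxE; ring.
have upper := hdesc Xxh Xx'; rewrite -/g lin_split step_diff sqnormZ in upper.
have lower_x : (1 - bt) * (f xh + dot g (x - xh)) <= (1 - bt) * f x.
  by rewrite ler_wpM2l ?subr_ge0 //; apply: hgrad.
have lower_xx : bt * (f xh + dot g (xx - xh)) <= bt * f xx.
  by rewrite ler_wpM2l //; apply: hgrad.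
lra.
Qed.

(* One step of the accelerated stochastic inner loop (Lan's AC-SA step): with
   d = gF(xh) - del the stochastic direction and b' the prox point, the gap
   Psi(x') - Psi(xx) + 1/2||xx - x'||_M^2 contracts by 1 - bt up to the error
   terms in del and a telescoping H-distance. *)
Lemma agd_step (M : 'M[R]_n) (h xk b b' x x' xx d del : 'cV[R]_n) (bt gt : R) :
  spd H -> psd M -> 0 < bt <= 1 -> 0 < gt - nu * bt ->
  X b -> X x -> X xx ->
  is_argmin X (fun u => dot (d + h) u + gt / 2 * sqnorm H (u - b)
                        + 1 / 2 * sqnorm M (u - xk)) b' ->
  x' = bt *: b' + (1 - bt) *: x -> del = gF (bt *: b + (1 - bt) *: x) - d ->
  xsub_obj f h M xk x' - xsub_obj f h M xk xx + 1 / 2 * sqnorm M (xx - x')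
  <= (1 - bt) * (xsub_obj f h M xk x - xsub_obj f h M xk xx + 1 / 2 * sqnorm M (xx - x))
     + bt * (dot del (b - xx) + sqnorm (invmx H) del / (2 * (gt - nu * bt))
             + gt / 2 * (sqnorm H (xx - b) - sqnorm H (xx - b'))).
Proof.
move=> hH hM /andP[bt0 bt1] hc Xb Xx Xxx hmin ex' edel.
have hbt : 0 <= bt <= 1 by rewrite ltW.
have Xb' : X b' by case: hmin.
have interp := smooth_interpolation hbt Xb Xb' Xx Xxx ex'.
have ed : d = gF (bt *: b + (1 - bt) *: x) - del by rewrite edel opprB addrC subrK.
have three_pt := argmin_three_point cX hmin Xxx.
rewrite ed !dotDl !dotNl in three_pt.
have three_pt' := ler_wpM2l (ltW bt0) three_pt.
have young := young_spd del (b' - b) hH hc.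
have young' := ler_wpM2l (ltW bt0) young.
have conv_center := sqnorm_convex (b' - xk) (x - xk) hM hbt.
have conv_xx := sqnorm_convex (xx - b') (xx - x) hM hbt.
have comb_center : bt *: (b' - xk) + (1 - bt) *: (x - xk) = x' - xk.
  by rewrite ex'; apply/matrixP => i j; rewrite !mxE; ring.
have comb_xx : bt *: (xx - b') + (1 - bt) *: (xx - x) = xx - x'.
  by rewrite ex'; apply/matrixP => i j; rewrite !mxE; ring.
rewrite comb_center in conv_center; rewrite comb_xx in conv_xx.
have eh : dot h x' = bt * dot h b' + (1 - bt) * dot h x by rewrite ex' dotDr !dotZr.
rewrite /xsub_obj eh; rewrite !dotBr in interp young' *.
lra.
Qed.

End Smooth.

Lemma agd_weight_bounds (T : R) : 1 <= T -> 0 < 2 / (T + 1) <= 1.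
Proof.
move=> T1; apply/andP; split; first by rewrite divr_gt0 //; lra.
by rewrite ler_pdivrMr; lra.
Qed.

Lemma agd_weight_nat (t : nat) : (1 <= t)%N -> 0 <= (2 / (t%:R + 1) : R) <= 1.
Proof.
move=> t1; have T1 : 1 <= t%:R :> R by rewrite ler1n.
by have /andP[b0 ->] := agd_weight_bounds T1; rewrite ltW.
Qed.

Lemma agd_error_weight (T eta nu : R) : 1 <= T -> 0 < eta -> 0 < nu -> eta * nu < 1 ->
  let c := 2 / (T * eta) - nu * (2 / (T + 1)) in
  0 < c /\ T / (2 * c) <= eta / (4 * (1 - eta * nu)) * T ^+ 2.
Proof.
move=> T1 e0 n0 en c.
have T0 : 0 < T by lra.
have D0 : 0 < T + 1 - nu * eta * T by nra.
have E0 : 0 < 1 - eta * nu by lra.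
have ec : c = 2 * (T + 1 - nu * eta * T) / (T * eta * (T + 1)).
  by rewrite /c; field; rewrite ?gt_eqF //; lra.
have c0 : 0 < c by rewrite ec divr_gt0 ?mulr_gt0 //; lra.
split => //.
have -> : T / (2 * c) = T ^+ 2 * eta * (T + 1) / (4 * (T + 1 - nu * eta * T)).
  by rewrite ec; field; rewrite ?gt_eqF //; lra.
rewrite ler_pdivrMr ?mulr_gt0 //.
have -> : eta / (4 * (1 - eta * nu)) * T ^+ 2 * (4 * (T + 1 - nu * eta * T))
   = T ^+ 2 * eta * ((T + 1 - nu * eta * T) / (1 - eta * nu)).
  by field; rewrite ?gt_eqF //; lra.
rewrite ler_pM2l ?mulr_gt0 ?exprn_gt0 //.
by rewrite ler_pdivlMr //; nra.
Qed.

(* Multiplying the step inequality by T(T+1)/2 turns the contraction factor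
   1 - bt into the previous weight (T-1)T/2, which makes the bound telescope. *)
Lemma agd_weighted_step (T eta nu P P' D Q Hb Hb' : R) :
  1 <= T -> 0 < eta -> 0 < nu -> eta * nu < 1 -> 0 <= Q ->
  let bt := 2 / (T + 1) in let gt := 2 / (T * eta) in
  P' <= (1 - bt) * P + bt * (D + Q / (2 * (gt - nu * bt)) + gt / 2 * (Hb - Hb')) ->
  T * (T + 1) / 2 * P'
  <= (T - 1) * T / 2 * P + T * D + eta / (4 * (1 - eta * nu)) * (T ^+ 2 * Q)
     + eta^-1 * (Hb - Hb').
Proof.
move=> T1 e0 n0 en Q0 bt gt step.
have T0 : 0 < T by lra.
have [c0 err_weight] := agd_error_weight T1 e0 n0 en.
set c := gt - nu * bt in step c0 err_weight.
have w0 : 0 <= T * (T + 1) / 2 by rewrite divr_ge0 // mulr_ge0 //; lra.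
have step_w := ler_wpM2l w0 step.
have err_term : T * (Q / (2 * c)) <= eta / (4 * (1 - eta * nu)) * (T ^+ 2 * Q).
  by rewrite mulrA [_ * Q / _]mulrAC mulrA ler_wpM2r.
have -> : (T - 1) * T / 2 * P + T * D + eta / (4 * (1 - eta * nu)) * (T ^+ 2 * Q)
     + eta^-1 * (Hb - Hb')
   = T * (T + 1) / 2 * ((1 - bt) * P + bt * (D + Q / (2 * c) + gt / 2 * (Hb - Hb')))
     + (eta / (4 * (1 - eta * nu)) * (T ^+ 2 * Q) - T * (Q / (2 * c))).
  by rewrite /gt /bt; field; rewrite ?gt_eqF //; lra.
lra.
Qed.

End AcceleratedStep.

Section InnerLoop.
Variable R : realType.

(* The inner iterates stay in X: each new point is a minimizer over X or a
   convex combination of two points of X. *)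
Lemma inner_iterates_in_X n (X : set 'cV[R]_n) (xin xbin : nat -> 'cV[R]_n)
    (obj : nat -> 'cV[R]_n -> R) (bt : nat -> R) (m : nat) :
  Defs.convex_set X -> X (xin 1%N) -> X (xbin 1%N) ->
  (forall t, (1 <= t <= m)%N -> 0 <= bt t <= 1) ->
  (forall t, (1 <= t <= m)%N -> is_argmin X (obj t) (xbin t.+1)
     /\ xin t.+1 = bt t *: xbin t.+1 + (1 - bt t) *: xin t) ->
  forall t, (1 <= t <= m.+1)%N -> X (xin t) /\ X (xbin t).
Proof.
move=> cX X1 Xb1 hbt hin; elim => [//|[_ _ //|t] IH /andP[_ htm]].
have ht : (1 <= t.+1 <= m)%N by rewrite ltn0Sn.
have [Xx Xb] := IH (ltnW htm).
have [[Xb' _] ex'] := hin _ ht.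
by split => //; rewrite ex'; exact: cX (hbt _ ht).
Qed.

Lemma outer_iterates_in_X n (X : set 'cV[R]_n) (x xb : nat -> 'cV[R]_n)
    (xin xbin : nat -> nat -> 'cV[R]_n) (obj : nat -> nat -> 'cV[R]_n -> R)
    (m : nat -> nat) :
  Defs.convex_set X -> X (x 0%N) -> xb 0%N = x 0%N ->
  (forall k, xin k 1%N = x k /\ xbin k 1%N = xb k) ->
  (forall k t, (1 <= t <= m k)%N -> is_argmin X (obj k t) (xbin k t.+1)
     /\ xin k t.+1 = (2 / (t%:R + 1)) *: xbin k t.+1 + (1 - 2 / (t%:R + 1)) *: xin k t) ->
  (forall k, x k.+1 = xin k (m k).+1 /\ xb k.+1 = xbin k (m k).+1) ->
  forall k, X (x k) /\ X (xb k).
Proof.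
move=> cX X0 exb0 hinit hin hout; elim => [|k [Xk Xbk]]; first by rewrite exb0.
have [e1 e2] := hinit k; have [-> ->] := hout k.
have hbt : forall t, (1 <= t <= m k)%N -> 0 <= (2 / (t%:R + 1) : R) <= 1.
  by move=> t /andP[t1 _]; exact: agd_weight_nat.
apply: (inner_iterates_in_X cX _ _ hbt (hin k)); rewrite ?e1 ?e2 //.
by rewrite ltn0Sn leqnn.
Qed.

Variables (n : nat) (X : set 'cV[R]_n) (f : 'cV[R]_n -> R) (gF : 'cV[R]_n -> 'cV[R]_n).
Variables (H : 'M[R]_n) (nu : R).
Hypothesis cX : Defs.convex_set X.
Hypothesis hgrad : forall a u, X a -> X u -> f a + dot (gF a) (u - a) <= f u.
Hypothesis hdesc : forall a u, X a -> X u ->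
  f u <= f a + dot (gF a) (u - a) + nu / 2 * sqnorm H (u - a).

(* Telescoping the weighted steps over 1..t bounds the weighted gap of the
   inner iterate x_{t+1} by the accumulated gradient errors del_t and the
   H-distances of xx to the prox centers. *)
Lemma agd_inner (M : 'M[R]_n) (eta : R) (h xk xx : 'cV[R]_n)
    (xin xbin d del : nat -> 'cV[R]_n) (m : nat) :
  spd H -> psd M -> 0 < nu -> 0 < eta -> eta * nu < 1 ->
  X (xin 1%N) -> X (xbin 1%N) -> X xx ->
  (forall t, (1 <= t <= m)%N ->
     is_argmin X (fun u => dot (d t + h) u + 2 / (t%:R * eta) / 2 * sqnorm H (u - xbin t)
                          + 1 / 2 * sqnorm M (u - xk)) (xbin t.+1)
     /\ xin t.+1 = (2 / (t%:R + 1)) *: xbin t.+1 + (1 - 2 / (t%:R + 1)) *: xin t) ->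
  (forall t, del t
     = gF ((2 / (t%:R + 1)) *: xbin t + (1 - 2 / (t%:R + 1)) *: xin t) - d t) ->
  forall t, (t <= m)%N ->
  t%:R * (t%:R + 1) / 2 * (xsub_obj f h M xk (xin t.+1) - xsub_obj f h M xk xx
                           + 1 / 2 * sqnorm M (xx - xin t.+1))
  <= \sum_(1 <= i < t.+1) i%:R * dot (del i) (xbin i - xx)
     + eta / (4 * (1 - eta * nu)) * \sum_(1 <= i < t.+1) (i%:R ^+ 2 * sqnorm (invmx H) (del i))
     + eta^-1 * (sqnorm H (xx - xbin 1%N) - sqnorm H (xx - xbin t.+1)).
Proof.
move=> hH hM nu0 eta0 en X1 Xb1 Xxx hin hdel.
have hbt : forall t, (1 <= t <= m)%N -> 0 <= (2 / (t%:R + 1) : R) <= 1.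
  by move=> t /andP[t1 _]; exact: agd_weight_nat.
have hmem := inner_iterates_in_X cX X1 Xb1 hbt hin.
elim => [_|t IH htm]; first by rewrite !big_geq // !mul0r subrr !mulr0 !addr0.
have ht : (1 <= t.+1 <= m)%N by rewrite ltn0Sn.
have [Xx Xb] := hmem t.+1 (leqW ht).
have [hmin ex'] := hin _ ht.
have T1 : 1 <= t.+1%:R :> R by rewrite ler1n.
have [c0 _] := agd_error_weight T1 eta0 nu0 en.
have step := agd_step cX hgrad hdesc hH hM (agd_weight_bounds T1) c0 Xb Xx Xxx hmin ex'
  (hdel t.+1).
have weighted := agd_weighted_step T1 eta0 nu0 en (dual_sqnorm_ge0 _ hH) step.
have IHt := IH (ltnW htm).
rewrite -natr1 addrK in weighted.
rewrite big_nat_recr //= [X in _ <= _ + _ * X + _]big_nat_recr //= -natr1.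
lra.
Qed.

Lemma xsub_obj_gap m (A : 'M[R]_(m, n)) (M : 'M[R]_n) (beta : R) (h xk x1 xx : 'cV[R]_n) :
  symmx M ->
  xsub_obj f h M xk xx - xsub_obj f h M xk x1 - 1 / 2 * sqnorm M (xx - x1)
  = f xx - f x1 + dot (xx - x1) (h + beta *: (A^T *m (A *m (x1 - xk))))
    - bform (M - beta *: (A^T *m A)) (xx - x1) (xk - x1).
Proof.
move=> hM; rewrite /xsub_obj; set dx := xx - x1; set ex := xk - x1.
have -> : xx - xk = dx - ex by apply/matrixP => i j; rewrite !mxE; ring.
have -> : x1 - xk = - ex by rewrite opprB.
have -> : dot h xx = dot h dx + dot h x1 by rewrite -dotDr subrK.
clearbody dx ex.
rewrite bform_subAtA dotDr dotZr -dot_mulmxl mulmxN dotNr (dotC dx h).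
rewrite !sqnorm_bform !bformDl !bformDr !bformNl !bformNr (bformC ex dx hM).
by field.
Qed.

Lemma x_update_estimate p (A : 'M[R]_(p, n)) (res : 'cV[R]_n -> 'cV[R]_p)
    (M : 'M[R]_n) (beta eta : R) (lamk : 'cV[R]_p) (xk x1 xbk xbk1 xx : 'cV[R]_n)
    (xin xbin d del : nat -> 'cV[R]_n) (m : nat) :
  spd H -> symmx M -> psd (M - beta *: (A^T *m A)) ->
  0 < beta -> 0 < nu -> 0 < eta -> eta * nu < 1 -> (1 <= m)%N ->
  affine_in A res -> X xk -> X xbk -> X xx ->
  xin 1%N = xk -> xbin 1%N = xbk -> x1 = xin m.+1 -> xbk1 = xbin m.+1 ->
  (forall t, (1 <= t <= m)%N ->
     is_argmin X (fun u => dot (d t + - A^T *m (lamk - beta *: res xk)) u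
                          + 2 / (t%:R * eta) / 2 * sqnorm H (u - xbin t)
                          + 1 / 2 * sqnorm M (u - xk)) (xbin t.+1)
     /\ xin t.+1 = (2 / (t%:R + 1)) *: xbin t.+1 + (1 - 2 / (t%:R + 1)) *: xin t) ->
  (forall t, del t
     = gF ((2 / (t%:R + 1)) *: xbin t + (1 - 2 / (t%:R + 1)) *: xin t) - d t) ->
  bform (M - beta *: (A^T *m A)) (xx - x1) (xk - x1)
    + zeta H nu eta m xbk xbk1 del xbin xx
  <= f xx - f x1 + dot (xx - x1) (- (A^T *m (lamk - beta *: res x1))).
Proof.
move=> hH hM hD b0 nu0 eta0 en m1 haff Xk Xbk Xxx exin1 exbin1 ex1 exb1 hin hdel.
set h := - A^T *m (lamk - beta *: res xk) in hin.
have X1 : X (xin 1%N) by rewrite exin1.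
have Xb1 : X (xbin 1%N) by rewrite exbin1.
have inner_bound := agd_inner hH (psd_of_psd_subAtA b0 hD) nu0 eta0 en X1 Xb1 Xxx hin hdel
  (leqnn m).
rewrite -ex1 -exb1 exbin1 in inner_bound.
have mk0 : 0 < m%:R :> R by rewrite ltr0n.
have a0 : 0 < m%:R * (m%:R + 1) / 2 :> R by rewrite divr_gt0 // mulr_gt0 //; lra.
have zeta_scaled : m%:R * (m%:R + 1) / 2 * zeta H nu eta m xbk xbk1 del xbin xx
    = - (\sum_(1 <= i < m.+1) i%:R * dot (del i) (xbin i - xx)
         + eta / (4 * (1 - eta * nu)) *
           \sum_(1 <= i < m.+1) (i%:R ^+ 2 * sqnorm (invmx H) (del i))
         + eta^-1 * (sqnorm H (xx - xbk) - sqnorm H (xx - xbk1))).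
  by rewrite /zeta; field; rewrite ?gt_eqF //; lra.
have zeta_gap : zeta H nu eta m xbk xbk1 del xbin xx
          + (xsub_obj f h M xk x1 - xsub_obj f h M xk xx + 1 / 2 * sqnorm M (xx - x1))
          <= 0.
  by rewrite -(pmulr_rle0 _ a0) mulrDr zeta_scaled; lra.
have mult_shift : - (A^T *m (lamk - beta *: res x1)) = h + beta *: (A^T *m (A *m (x1 - xk))).
  have -> : res x1 = res xk + A *m (x1 - xk) by rewrite -haff addrC subrK.
  by rewrite /h scalerDr opprD addrA mulmxDr mulmxN opprD opprK mulNmx -scalemxAr.
have gap := xsub_obj_gap A beta h xk x1 xx hM.
rewrite mult_shift; lra.
Qed.

End InnerLoop.

Section ProxStep.
Variable R : realType.

Lemma prox_optimality n (Y : set 'cV[R]_n) (g : 'cV[R]_n -> \bar R)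
    (q : 'cV[R]_n -> R) (y1 : 'cV[R]_n) :
  Defs.convex_set Y -> proper_closed_convex Y g ->
  is_argmin_e Y (fun v => (g v + (q v)%:E)%E) y1 ->
  g y1 \is a fin_num /\
  forall yy (L K : R), Y yy ->
    (forall e : R, 0 < e < 1 -> q (e *: yy + (1 - e) *: y1) = q y1 + e * L + e ^+ 2 * K) ->
    ((fine (g y1) - L)%:E <= g yy)%E.
Proof.
move=> cY [hninf [u0 [Yu0 fu0]] _ hconv] [Y1 hmin].
have fy1 : g y1 \is a fin_num.
  rewrite fin_numE hninf //=; apply/negP => /eqP E.
  by have := hmin _ Yu0; rewrite E -(fineK fu0) addye //= -EFinD leye_eq.
split => // yy L K Yy hq.
case Egy : (g yy) => [gy| |]; last 2 first.
- by rewrite leey.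
- by move: (hninf _ Yy); rewrite Egy.
rewrite lee_fin; set G1 := fine (g y1).
have eG1 : g y1 = G1%:E by rewrite /G1 fineK.
suff : 0 <= gy - G1 + L by lra.
apply: (@first_order_nonneg _ _ K) => e /andP[e0 e1].
set ye := e *: yy + (1 - e) *: y1.
have Yye : Y ye by apply: cY => //; rewrite !ltW.
have hc := hconv _ _ e Yy Y1; rewrite e0 e1 /= Egy eG1 -!EFinM -EFinD in hc.
have {hc}hc := hc isT.
have fye : g ye \is a fin_num by rewrite fin_numE hninf //=; move: hc; case: (g ye).
have hm := hmin _ Yye; rewrite /= -(fineK fye) eG1 -!EFinD lee_fin in hm.
rewrite -(fineK fye) lee_fin in hc.
rewrite hq ?e0 ?e1 // in hm.
have -> : e * (gy - G1 + L) + e ^+ 2 * K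
   = (e * gy + (1 - e) * G1 + (q y1 + e * L + e ^+ 2 * K)) - (G1 + q y1) by ring.
lra.
Qed.

Lemma prox_update n p (Y : set 'cV[R]_p) (g : 'cV[R]_p -> \bar R) (K : 'M[R]_(n, p))
    (L : 'M[R]_p) (beta tau : R) (res : 'cV[R]_p -> 'cV[R]_n) (lam lamh lamt : 'cV[R]_n)
    (yk y1 : 'cV[R]_p) :
  Defs.convex_set Y -> proper_closed_convex Y g -> symmx L -> 0 < beta ->
  affine_in K res ->
  lamh = lam - (tau * beta) *: res yk -> lamt = lam - beta *: res yk ->
  is_argmin_e Y (fun v => (g v + (beta / 2 * dot (res v - beta^-1 *: lamh)
                                              (res v - beta^-1 *: lamh)
                                 + 1 / 2 * sqnorm L (v - yk))%:E)%E) y1 ->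
  g y1 \is a fin_num /\
  forall yy, Y yy ->
  ((fine (g y1) + bform L (yy - y1) (yk - y1)
     + beta * dot (K *m (yy - y1)) (K *m (yk - y1))
     - tau * dot (K *m (yy - y1)) (lam - lamt) - dot (yy - y1) (- (K^T *m lamt)))%:E
   <= g yy)%E.
Proof.
move=> cY hg hL b0 haff elh elt hmin.
have [fy1 Hopt] := prox_optimality cY hg hmin.
split => // yy Yy; set w := yy - y1; set u := res y1 - beta^-1 *: lamh.
set Lc := beta / 2 * (dot u (K *m w) + dot (K *m w) u)
          + 1 / 2 * (bform L (y1 - yk) w + bform L w (y1 - yk)).
set Kc := beta / 2 * dot (K *m w) (K *m w) + 1 / 2 * sqnorm L w.
have hres : forall e : R, res (y1 + e *: w) - beta^-1 *: lamh = u + e *: (K *m w).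
  move=> e; have ew : y1 + e *: w - y1 = e *: w by rewrite addrC addKr.
  rewrite -[res (y1 + _)](subrK (res y1)) haff ew scalemxAr /u.
  by rewrite [_ + res y1]addrC addrAC.
have hq : forall e : R, 0 < e < 1 ->
    beta / 2 * dot (res (e *: yy + (1 - e) *: y1) - beta^-1 *: lamh)
                   (res (e *: yy + (1 - e) *: y1) - beta^-1 *: lamh)
    + 1 / 2 * sqnorm L (e *: yy + (1 - e) *: y1 - yk)
    = beta / 2 * dot u u + 1 / 2 * sqnorm L (y1 - yk) + e * Lc + e ^+ 2 * Kc.
  move=> e _; rewrite comb_shift -/w hres dot_shift [y1 + _ - yk]addrAC sqnorm_shift /Lc /Kc.
  ring.
apply: le_trans (Hopt yy Lc Kc Yy hq); rewrite lee_fin.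
have mult_identity : - beta *: u - lamt = beta *: (K *m (yk - y1)) - tau *: (lam - lamt).
  rewrite /u -haff elt elh; apply/matrixP => i j; rewrite !mxE.
  by field; rewrite gt_eqF.
clearbody u.
have mult_pair : dot (K *m w) (- beta *: u - lamt)
        = dot (K *m w) (beta *: (K *m (yk - y1)) - tau *: (lam - lamt)) by rewrite mult_identity.
rewrite dotBr dotZr dotBr !dotZr in mult_pair.
rewrite /Lc; have -> : y1 - yk = - (yk - y1) by rewrite opprB.
rewrite (bformC (- _) w hL) bformNr dotNr -dot_mulmxl (dotC u (K *m w)).
lra.
Qed.

End ProxStep.

Section Assembly.
Variable R : realType.

Lemma wvecB n1 n2 n3 n (a a' : 'cV[R]_n1) (b b' : 'cV[R]_n2) (c c' : 'cV[R]_n3)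
    (d d' : 'cV[R]_n) :
  wvec a b c d - wvec a' b' c' d' = wvec (a - a') (b - b') (c - c') (d - d').
Proof. by rewrite /wvec !opp_col_mx !add_col_mx. Qed.

Lemma dot_wvec n1 n2 n3 n (a a' : 'cV[R]_n1) (b b' : 'cV[R]_n2) (c c' : 'cV[R]_n3)
    (d d' : 'cV[R]_n) :
  dot (wvec a b c d) (wvec a' b' c' d') = dot a a' + dot b b' + dot c c' + dot d d'.
Proof. by rewrite /dot /wvec !tr_col_mx !mul_row_col !mxE_add !addrA. Qed.

(* The operator J is affine with a skew-symmetric linear part, so
   <w - w', J(w) - J(w')> = 0. *)
Lemma Jop_skew n1 n2 n3 n (A : 'M[R]_(n, n1)) (B : 'M[R]_(n, n2)) (C : 'M[R]_(n, n3))
    (b : 'cV[R]_n) xx x1 yy y1 zz z1 ll l1 :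
  dot (wvec xx yy zz ll - wvec x1 y1 z1 l1)
      (Jop A B C b xx yy zz ll - Jop A B C b x1 y1 z1 l1) = 0.
Proof.
rewrite /Jop !wvecB dot_wvec -!mulmxBr !mulNmx !dotNr -!dot_mulmxl.
have -> : A *m xx + B *m yy + C *m zz - b - (A *m x1 + B *m y1 + C *m z1 - b)
    = A *m (xx - x1) + B *m (yy - y1) + C *m (zz - z1).
  by rewrite !mulmxBr; apply/matrixP => i j; rewrite !(mxE_add, mxE_opp); ring.
by rewrite !dotDr (dotC (ll - l1)) (dotC (ll - l1)) (dotC (ll - l1)) !dotBr !dotNr; ring.
Qed.

Lemma Qmat_expand n n1 n2 n3 (D : 'M[R]_n1) L1 L2 (B : 'M[R]_(n, n2))
    (C : 'M[R]_(n, n3)) beta tau dx dy dz dl ex ey ez el :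
  ((wvec dx dy dz dl)^T *m Qmat D L1 L2 B C beta tau *m wvec ex ey ez el) 0 0 =
  bform D dx ex + bform L1 dy ey + beta * dot (B *m dy) (B *m ey) - dot dl (B *m ey)
  + bform L2 dz ez + beta * dot (C *m dz) (C *m ez) - dot dl (C *m ez)
  - tau * dot (B *m dy) el - tau * dot (C *m dz) el + beta^-1 * dot dl el.
Proof.
rewrite /wvec /Qmat.
do 4 rewrite ?tr_col_mx ?tr_row_mx ?mul_row_block ?mul_row_col ?mulmx0 ?mul0mx
  ?addr0 ?add0r.
rewrite ?mul_mx_row ?add_row_mx ?mul_row_col ?mulmx0 ?addr0 ?add0r ?mul_mx_scalar.
do 3 rewrite ?mulmxDl ?mulmxDr ?mulmxN ?mulNmx ?mxE_add ?mxE_opp -?scalemxAl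
  -?scalemxAr ?mxE_scale ?mulmxA.
by rewrite /bform /dot !trmx_mul !mulmxA; ring.
Qed.

Lemma block_assembly n n1 n2 n3 (A : 'M[R]_(n, n1)) (B : 'M[R]_(n, n2))
    (C : 'M[R]_(n, n3)) (b : 'cV[R]_n) (D : 'M[R]_n1) (L1 : 'M[R]_n2) (L2 : 'M[R]_n3)
    (g : 'cV[R]_n2 -> \bar R) (l : 'cV[R]_n3 -> \bar R) (beta tau fxx fx1 zt : R)
    (x1 xk xx : 'cV[R]_n1) (y1 yk yy : 'cV[R]_n2) (z1 zk zz : 'cV[R]_n3)
    (lamk lamt ll : 'cV[R]_n) :
  0 < beta ->
  lamt = lamk - beta *: (A *m x1 + B *m yk + C *m zk - b) ->
  bform D (xx - x1) (xk - x1) + zt <= fxx - fx1 + dot (xx - x1) (- (A^T *m lamt)) ->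
  g y1 \is a fin_num ->
  ((fine (g y1) + bform L1 (yy - y1) (yk - y1)
     + beta * dot (B *m (yy - y1)) (B *m (yk - y1))
     - tau * dot (B *m (yy - y1)) (lamk - lamt) - dot (yy - y1) (- (B^T *m lamt)))%:E
   <= g yy)%E ->
  l z1 \is a fin_num ->
  ((fine (l z1) + bform L2 (zz - z1) (zk - z1)
     + beta * dot (C *m (zz - z1)) (C *m (zk - z1))
     - tau * dot (C *m (zz - z1)) (lamk - lamt) - dot (zz - z1) (- (C^T *m lamt)))%:E
   <= l zz)%E ->
  (fxx%:E + g yy + l zz - (fx1%:E + g y1 + l z1)
     + (dot (wvec xx yy zz ll - wvec x1 y1 z1 lamt) (Jop A B C b xx yy zz ll))%:E
   >= (((wvec xx yy zz ll - wvec x1 y1 z1 lamt)^T *m Qmat D L1 L2 B C beta tau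
         *m (wvec xk yk zk lamk - wvec x1 y1 z1 lamt)) 0 0)%:E + zt%:E)%E.
Proof.
move=> b0 elt HX fy HY fz HZ.
have -> : dot (wvec xx yy zz ll - wvec x1 y1 z1 lamt) (Jop A B C b xx yy zz ll)
    = dot (wvec xx yy zz ll - wvec x1 y1 z1 lamt) (Jop A B C b x1 y1 z1 lamt).
  by apply/eqP; rewrite -subr_eq0 -dotBr Jop_skew.
have residual1 : A *m x1 + B *m y1 + C *m z1 - b
    = - (B *m (yk - y1)) - C *m (zk - z1) + beta^-1 *: (lamk - lamt).
  rewrite elt !mulmxBr; apply/matrixP => i j; rewrite !(mxE_add, mxE_opp, mxE_scale).
  by field; rewrite gt_eqF.
rewrite !wvecB Qmat_expand /Jop dot_wvec residual1 !dotDr !dotNr dotZr.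
rewrite -[g y1](fineK fy) -[l z1](fineK fz).
apply: le_trans (leeD2r _ (leeD2r _ (leeD (leeD (lexx fxx%:E) HY) HZ))).
rewrite -!(EFinD, EFinN, EFinB) lee_fin !mulNmx !dotBr !dotNr.
rewrite dotNr in HX.
lra.
Qed.

End Assembly.

Unset Implicit Arguments.
Set Strict Implicit.
Set Printing Implicit Defensive.

Theorem theorem4p5
  (R : realType) (n n1 n2 n3 N : nat) (HN : (0 < N)%N)
  (X : set 'cV[R]_n1) (Y : set 'cV[R]_n2) (Z : set 'cV[R]_n3)
  (hX : ncc_set X) (hY : ncc_set Y) (hZ : ncc_set Z)
  (A : 'M[R]_(n, n1)) (B : 'M[R]_(n, n2)) (C : 'M[R]_(n, n3)) (b : 'cV[R]_n)
  (g : 'cV[R]_n2 -> \bar R) (l : 'cV[R]_n3 -> \bar R)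
  (hg : proper_closed_convex Y g) (hl : proper_closed_convex Z l)
  (fj : 'I_N -> 'cV[R]_n1 -> R) (gradf : 'I_N -> 'cV[R]_n1 -> 'cV[R]_n1)
  (U : 'I_N -> set 'cV[R]_n1)
  (hf : forall j, [/\ X `<=` U j, convex_fun_on X (fj j)
                    & C1_with_grad (U j) (fj j) (gradf j)])
  (H : 'M[R]_n1) (nu : R) (hH : spd H) (hnu : 0 < nu)
  (hLip : forall j x1 x2, X x1 -> X x2 ->
     Num.sqrt (sqnorm (invmx H) (gradf j x1 - gradf j x2))
       <= nu * Num.sqrt (sqnorm H (x1 - x2)))
  (beta tau s : R) (hbeta : 0 < beta) (hts : Delta tau s)
  (L1 : 'M[R]_n2) (L2 : 'M[R]_n3) (hL1 : symmx L1) (hL2 : symmx L2)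
  (* outer iterates *)
  (x : nat -> 'cV[R]_n1) (y : nat -> 'cV[R]_n2) (z : nat -> 'cV[R]_n3)
  (lam : nat -> 'cV[R]_n) (xb : nat -> 'cV[R]_n1) (lamh : nat -> 'cV[R]_n)
  (m : nat -> nat) (eta : nat -> R) (M : nat -> 'M[R]_n1)
  (* inner quantities of xsub at outer iteration k, inner step t *)
  (xin xbin : nat -> nat -> 'cV[R]_n1) (xi : nat -> nat -> 'I_N)
  (e : nat -> nat -> 'cV[R]_n1)
  (h0 : [/\ X (x 0%N), Y (y 0%N) & Z (z 0%N)]) (hxb0 : xb 0%N = x 0%N)
  (hparam : forall k, [/\ (1 <= m k)%N, 0 < eta k, symmx (M k)
                        & psd (M k - beta *: (A^T *m A))])
  (hinit : forall k, xin k 1%N = x k /\ xbin k 1%N = xb k)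
  (hinner : forall k t, (1 <= t <= m k)%N ->
     let bt : R := 2 / (t%:R + 1) in
     let gt : R := 2 / (t%:R * eta k) in
     let hk := - A^T *m (lam k - beta *: (A *m x k + B *m y k + C *m z k - b)) in
     let xhat := bt *: xbin k t + (1 - bt) *: xin k t in
     let d := gradf (xi k t) xhat + e k t in
     is_argmin X (fun u => dot (d + hk) u + gt / 2 * sqnorm H (u - xbin k t)
                           + 1 / 2 * sqnorm (M k) (u - x k)) (xbin k t.+1)
     /\ xin k t.+1 = bt *: xbin k t.+1 + (1 - bt) *: xin k t)
  (hout : forall k, x k.+1 = xin k (m k).+1 /\ xb k.+1 = xbin k (m k).+1)
  (hlamh : forall k,
     lamh k = lam k - (tau * beta) *: (A *m x k.+1 + B *m y k + C *m z k - b))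
  (hy : forall k, is_argmin_e Y
     (fun v => (g v + (beta / 2 * dot (A *m x k.+1 + B *m v + C *m z k - b - beta^-1 *: lamh k)
                                      (A *m x k.+1 + B *m v + C *m z k - b - beta^-1 *: lamh k)
                       + 1 / 2 * sqnorm L1 (v - y k))%:E)%E) (y k.+1))
  (hz : forall k, is_argmin_e Z
     (fun v => (l v + (beta / 2 * dot (A *m x k.+1 + B *m y k + C *m v - b - beta^-1 *: lamh k)
                                      (A *m x k.+1 + B *m y k + C *m v - b - beta^-1 *: lamh k)
                       + 1 / 2 * sqnorm L2 (v - z k))%:E)%E) (z k.+1))
  (hlam : forall k,
     lam k.+1 = lamh k - (s * beta) *: (A *m x k.+1 + B *m y k.+1 + C *m z k.+1 - b)) :
  forall k : nat, 0 < eta k < nu^-1 ->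
  let f := fun u => N%:R^-1 * \sum_(j < N) fj j u in
  let gradF := fun u => N%:R^-1 *: \sum_(j < N) gradf j u in
  let delta := fun t : nat =>
     let bt : R := 2 / (t%:R + 1) in
     let xhat := bt *: xbin k t + (1 - bt) *: xin k t in
     gradF xhat - (gradf (xi k t) xhat + e k t) in
  let lamt := lam k - beta *: (A *m x k.+1 + B *m y k + C *m z k - b) in
  let Fw := fun x' y' z' => ((f x')%:E + g y' + l z')%E in
  forall (xx : 'cV[R]_n1) (yy : 'cV[R]_n2) (zz : 'cV[R]_n3) (ll : 'cV[R]_n),
  X xx -> Y yy -> Z zz ->
  (Fw xx yy zz - Fw (x k.+1) (y k.+1) (z k.+1)
     + (dot (wvec xx yy zz ll - wvec (x k.+1) (y k.+1) (z k.+1) lamt)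
            (Jop A B C b xx yy zz ll))%:E
   >= (((wvec xx yy zz ll - wvec (x k.+1) (y k.+1) (z k.+1) lamt)^T
         *m Qmat (M k - beta *: (A^T *m A)) L1 L2 B C beta tau
         *m (wvec (x k) (y k) (z k) (lam k) - wvec (x k.+1) (y k.+1) (z k.+1) lamt)) 0 0)%R
      %:E
      + (zeta H nu (eta k) (m k) (xb k) (xb k.+1) delta (xbin k) xx)%:E)%E.
Proof.
move=> k /andP[eta0 eta_lt] f gradF delta lamt Fw xx yy zz ll Xxx Yyy Zzz.
have cX : Defs.convex_set X by case: hX => _ [].
have cY : Defs.convex_set Y by case: hY => _ [].
have cZ : Defs.convex_set Z by case: hZ => _ [].
have [hgrad hdesc] := average_smooth_convex HN cX hH hnu hf hLip.
have [res_x res_y res_z] := residuals_affine A B C b (x k.+1) (y k) (z k).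
have [X0 _ _] := h0.
have [Xk Xbk] := outer_iterates_in_X cX X0 hxb0 hinit hinner hout k.
have [m1 _ symM psdD] := hparam k.
have en : eta k * nu < 1 by rewrite -ltr_pdivlMr // div1r.
have [exin1 exbin1] := hinit k.
have [ex1 exb1] := hout k.
have HX := x_update_estimate cX hgrad hdesc hH symM psdD hbeta hnu eta0 en m1 res_x
  Xk Xbk Xxx exin1 exbin1 ex1 exb1 (hinner k) (fun t => erefl).
have [fy HY] := prox_update cY hg hL1 hbeta res_y (hlamh k) erefl (hy k).
have [fz HZ] := prox_update cZ hl hL2 hbeta res_z (hlamh k) erefl (hz k).
exact: block_assembly hbeta erefl HX fy (HY _ Yyy) fz (HZ _ Zzz).
Qed.
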